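(* Let $\alpha,\beta,\gamma\in\mathbb{F}\setminus\{\frac12\}$, and let $\mathbf{A}$ be the 5-dimensional LV algebra with natural basis $e_1,\dots,e_5$ in which $e_1e_2=\alpha e_1+(1-\alpha)e_2$, $e_2e_3=\beta e_2+(1-\beta)e_3$, $e_3e_4=\gamma e_3+(1-\gamma)e_4$, and $e_ie_j=\frac12(e_i+e_j)$ for all other pairs $i,j$. Then $\mathrm{Der}(\mathbf{A})=\{0\}$.
   Context: Let $\mathbb{F}$ be a field of characteristic different from $2$. A Lotka–Volterra (LV) algebra of dimension $5$ over $\mathbb{F}$ is a commutative (not necessarily associative) $\mathbb{F}$-algebra $\mathbf{A}$ with a basis $e_1,\dots,e_5$ (the natural basis) such that $e_ie_j=\alpha_{ij}e_i+\alpha_{ji}e_j$ with $\alpha_{ij}\in\mathbb{F}$, $\alpha_{ii}=\frac12$ and $\alpha_{ij}+\alpha_{ji}=1$ for all $i,j$. A derivation is a linear map $D:\mathbf{A}\to\mathbf{A}$ with $D(uv)=D(u)v+uD(v)$ for all $u,v$; $\mathrm{Der}(\mathbf{A})$ is the set of derivations. *)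

From HB Require Import structures.
From mathcomp Require Import all_boot all_order all_algebra.
Set Implicit Arguments. Unset Strict Implicit. Unset Printing Implicit Defensive.
Import Order.TTheory GRing.Theory Num.Theory.
Local Open Scope ring_scope.

(* Vectors of the 5-dim algebra are row vectors 'rV[F]_5 in the coordinates of
   the natural basis e_1..e_5 (indexed 0..4). *)

Definition is_LV (F : fieldType) (n : nat) (a : 'M[F]_n) : Prop :=
  (forall i, a i i = 2%:R^-1) /\ (forall i j, a i j + a j i = 1).

(* The bilinear product with e_i e_j = a_ij e_i + a_ji e_j. *)
Definition lv_mul (F : fieldType) (n : nat) (a : 'M[F]_n) (u v : 'rV[F]_n)
  : 'rV[F]_n :=
  \row_k \sum_(i < n) \sum_(j < n)
      u 0 i * v 0 j * (a i j * (k == i)%:R + a j i * (k == j)%:R).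

Definition is_derivation (F : fieldType) (n : nat) (a : 'M[F]_n)
  (D : 'rV[F]_n -> 'rV[F]_n) : Prop :=
  (forall u v, D (u + v) = D u + D v) /\
  (forall (c : F) u, D (c *: u) = c *: D u) /\
  (forall u v, D (lv_mul a u v) = lv_mul a (D u) v + lv_mul a u (D v)).

Definition alpha5 (F : fieldType) (al be ga : F) : 'M[F]_5 :=
  \matrix_(i, j)
    if (val i == 0%N) && (val j == 1%N) then al
    else if (val i == 1%N) && (val j == 0%N) then 1 - al
    else if (val i == 1%N) && (val j == 2%N) then be
    else if (val i == 2%N) && (val j == 1%N) then 1 - be
    else if (val i == 2%N) && (val j == 3%N) then ga
    else if (val i == 3%N) && (val j == 2%N) then 1 - ga
    else 2%:R^-1.

From HB Require Import structures.
From mathcomp Require Import all_boot all_order all_algebra.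
From mathcomp Require Import ring.
Set Implicit Arguments. Unset Strict Implicit. Unset Printing Implicit Defensive.
Import GRing.Theory.
Local Open Scope ring_scope.

(* Record a derivation D of an LV algebra with structure matrix a by its matrix
   d, with d_ik the e_k-coordinate of D e_i.  Comparing coordinates in
   D e_i = D (e_i e_i) = 2 e_i D(e_i) gives (a_ik - a_ki) d_ik = 0; with this,
   the e_j-coordinate of D (e_i e_j) = D(e_i) e_j + e_i D(e_j) collapses to
   sum_k a_jk d_ik = 0, that is d a^T = 0.  So an LV algebra whose structure
   matrix is invertible has no nonzero derivation.  Writing the matrix of the
   theorem as J/2 + B with B skew-symmetric, supported on the path
   e1 - e2 - e3 - e4, the system x a = 0 is solved by hand: the isolated e5
   forces sum x = 0, and then x B = 0 kills the coordinates one at a time. *)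

Section LVProduct.
Variables (F : fieldType) (n : nat) (a : 'M[F]_n).

Lemma lv_mulC u v : lv_mul a u v = lv_mul a v u.
Proof.
apply/rowP => m; rewrite !mxE exchange_big; apply: eq_bigr => j _.
by apply: eq_bigr => i _; rewrite [u 0 i * _]mulrC addrC.
Qed.

Lemma lv_mul_delta_r u j m :
  lv_mul a u (delta_mx 0 j) 0 m =
  u 0 m * a m j + (m == j)%:R * \sum_k u 0 k * a j k.
Proof.
rewrite mxE (eq_bigr (fun i => u 0 i * a i j * (m == i)%:R
                             + (m == j)%:R * (u 0 i * a j i))) => [|i _].
  rewrite big_split /= -big_distrr /= (bigD1 m) //= eqxx mulr1.
  by rewrite big1 ?addr0 // => i /negbTE ne; rewrite eq_sym ne mulr0.
rewrite (bigD1 j) //= big1 => [|l /negbTE ne]; last first.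
  by rewrite mxE ne andbF mulr0 mul0r.
by rewrite mxE !eqxx mulr1 addr0; ring.
Qed.

Lemma lv_mul_delta i j :
  lv_mul a (delta_mx 0 i) (delta_mx 0 j) =
  a i j *: delta_mx 0 i + a j i *: delta_mx 0 j.
Proof.
apply/rowP => m; rewrite lv_mul_delta_r (bigD1 i) //= big1 => [|k /negbTE ne].
  by rewrite !mxE !eqxx /= addr0; case: eqP => [->|_]; rewrite ?eqxx /=; ring.
by rewrite mxE ne mul0r.
Qed.
End LVProduct.

Lemma half_add_half (F : fieldType) : (2%:R : F) != 0 -> 2%:R^-1 + 2%:R^-1 = 1 :> F.
Proof. by move=> two_neq0; field. Qed.

Definition der_mx (F : fieldType) (n : nat) (D : 'rV[F]_n -> 'rV[F]_n) : 'M[F]_n :=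
  \matrix_(i, k) D (delta_mx 0 i) 0 k.

Section LVDerivation.
Variables (F : fieldType) (n : nat) (a : 'M[F]_n) (D : 'rV[F]_n -> 'rV[F]_n).
Hypotheses (aLV : is_LV a) (two_neq0 : (2%:R : F) != 0) (derD : is_derivation a D).

Local Notation d := (der_mx D).

(* The e_m-coordinate of D (e_i e_j) = D(e_i) e_j + e_i D(e_j). *)
Lemma der_mx_delta i j m :
  a i j * d i m + a j i * d j m =
  d i m * a m j + (m == j)%:R * \sum_k d i k * a j k +
  (d j m * a m i + (m == i)%:R * \sum_k d j k * a i k).
Proof.
case: derD => [Dadd [Dscale Dmul]].
under [\sum_k d i k * a j k]eq_bigr do rewrite mxE.
under [\sum_k d j k * a i k]eq_bigr do rewrite mxE.
rewrite !mxE.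
have := congr1 (fun w : 'rV_n => w 0 m) (Dmul (delta_mx 0 i) (delta_mx 0 j)).
rewrite lv_mul_delta Dadd !Dscale [lv_mul a (delta_mx 0 i) _]lv_mulC.
rewrite [in RHS]mxE !lv_mul_delta_r => <-.
by rewrite !mxE.
Qed.

Lemma der_mx_skew i k : (a i k - a k i) * d i k = 0.
Proof.
have [<-|neki] := eqVneq k i; first by rewrite subrr mul0r.
have := der_mx_delta i i k; rewrite (negbTE neki) !mul0r !addr0.
case: aLV => aii aC; rewrite aii -mulrDl half_add_half // mul1r => E.
have -> : a i k = 1 - a k i by rewrite -(aC i k) addrK.
have -> : (1 - a k i - a k i) * d i k = d i k - (d i k * a k i + d i k * a k i).
  by ring.
by rewrite -E subrr.
Qed.

Lemma der_mx_mul_tr : d *m a^T = 0.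
Proof.
case: aLV => aii aC; apply/matrixP => i j; rewrite mxE [RHS]mxE.
under eq_bigr do rewrite [a^T _ _]mxE.
have [->|neji] := eqVneq j i.
  have := der_mx_delta i i i; rewrite eqxx mul1r aii; set S := \sum_k _ => E.
  have S2 : S + S = 0.
    apply: (addIr (d i i * 2%:R^-1 + d i i * 2%:R^-1)).
    by rewrite add0r [in RHS](mulrC (d i i)) E; ring.
  by move/eqP: S2; rewrite -mulr2n -mulr_natr mulf_eq0 (negbTE two_neq0) orbF => /eqP.
have := der_mx_delta i j j; rewrite eqxx (negbTE neji) mul1r mul0r addr0.
set S := \sum_k _ => E.
have -> : S = (a i j - a j j) * d i j.
  transitivity (a i j * d i j + a j i * d j j - d i j * a j j - d j j * a j i).
    by rewrite E; ring.
  by ring.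
have -> : a i j - a j j = 2%:R^-1 * (a i j - a j i).
  have -> : a j i = 1 - a i j by rewrite -(aC i j); ring.
  by rewrite aii; field.
by rewrite -mulrA der_mx_skew mulr0.
Qed.

Lemma der_mx_eq0 : a \in unitmx -> d = 0.
Proof.
move=> a_unit; have : row_free a^T by rewrite row_free_unit unitmx_tr.
by move/row_free_inj; apply; rewrite der_mx_mul_tr mul0mx.
Qed.

Theorem LV_derivation_eq0 : a \in unitmx -> forall u, D u = 0.
Proof.
move=> /der_mx_eq0 d0 u; case: derD => [Dadd [Dscale _]].
have De i : D (delta_mx 0 i) = 0.
  by apply/rowP => k; have := congr1 (fun M : 'M_n => M i k) d0; rewrite !mxE.
rewrite (row_sum_delta u); apply: (big_ind (fun w => D w = 0)).
- by apply: (addIr (D 0)); rewrite -Dadd !add0r.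
- by move=> v w Dv Dw; rewrite Dadd Dv Dw addr0.
- by move=> i _; rewrite Dscale De scaler0.
Qed.
End LVDerivation.

Local Notation o5 k := (@Ordinal 5 k isT).

Lemma big_ord5 (V : nmodType) (f : 'I_5 -> V) :
  \sum_(k < 5) f k =
  f (o5 0) + f (o5 1) + f (o5 2) + f (o5 3) + f (o5 4).
Proof.
rewrite !big_ord_recl big_ord0 addr0 !addrA.
by congr (_ + _ + _ + _ + _); congr f; apply: val_inj.
Qed.

Lemma eq0_of_scaled_diff (F : fieldType) (c y s t : F) :
  c != 0 -> s = 0 -> t = 0 -> c * y = s - t -> y = 0.
Proof.
by move=> c_neq0 -> ->; rewrite subrr => /eqP; rewrite mulf_eq0 (negbTE c_neq0) => /eqP.
Qed.

Section Alpha5.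
Variables (F : fieldType) (al be ga : F).
Hypothesis two_neq0 : (2%:R : F) != 0.

Lemma alpha5_LV : is_LV (alpha5 al be ga).
Proof.
split=> [i | i j]; rewrite !mxE.
  by case: i => [[|[|[|[|[|?]]]]] ?].
case: i => [[|[|[|[|[|?]]]]] ?] //; case: j => [[|[|[|[|[|?]]]]] ?] //=;
  by [rewrite half_add_half | ring].
Qed.

Lemma alpha5_unit : al != 2%:R^-1 -> ga != 2%:R^-1 -> alpha5 al be ga \in unitmx.
Proof.
rewrite -(subr_eq0 al) -(subr_eq0 ga) => al_neq ga_neq.
rewrite -row_free_unit; apply: inj_row_free => x xa0.
have col j : \sum_(k < 5) x 0 k * alpha5 al be ga k j = 0.
  by have := congr1 (fun w : 'rV_5 => w 0 j) xa0; rewrite !mxE.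
have := col (o5 0); have := col (o5 1); have := col (o5 2); have := col (o5 3).
have := col (o5 4); rewrite !big_ord5 /alpha5 !mxE /= => e4 e3 e2 e1 e0.
have x1 : x 0 (o5 1) = 0 by apply: (eq0_of_scaled_diff al_neq e4 e0); field.
have x2 : x 0 (o5 2) = 0 by apply: (eq0_of_scaled_diff ga_neq e3 e4); field.
have x3 : x 0 (o5 3) = 0.
  by apply: (eq0_of_scaled_diff ga_neq e4 e2); rewrite x1; field.
have x0 : x 0 (o5 0) = 0.
  by apply: (eq0_of_scaled_diff al_neq e1 e4); rewrite x2; field.
have x4 : x 0 (o5 4) = 0.
  apply: (eq0_of_scaled_diff (invr_neq0 two_neq0) e4 (erefl 0)).
  by rewrite x0 x1 x2 x3; field.
apply/rowP => -[[|[|[|[|[|k]]]]] lt] //; rewrite mxE (bool_irrelevance lt isT) //.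
Qed.
End Alpha5.

Theorem mainTheorem13 (F : fieldType) (al be ga : F)
  (hchar : (2%:R : F) != 0)
  (hal : al != 2%:R^-1) (hbe : be != 2%:R^-1) (hga : ga != 2%:R^-1)
  (D : 'rV[F]_5 -> 'rV[F]_5) :
  is_derivation (alpha5 al be ga) D -> forall u, D u = 0.
Proof.
move=> derD; apply: (LV_derivation_eq0 (alpha5_LV al be ga hchar) hchar derD).
exact: alpha5_unit.
Qed.
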